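(* Suppose $k^2$ is not real. Let $u \in C^2(\mathcal{X}, F^i)$ and $f \in C^2(\mathcal{X}, F^{i+1})$ satisfy $M^i(u, f) = 0$ in $\mathcal{X}$. Either of the conditions $t(u) = 0$ and $n(f) = 0$ on $\partial\mathcal{X}$ implies $(u, f) \equiv 0$ in all of $\mathcal{X}$.
   Context: $\mathcal{X}$ is a compact manifold with boundary (with smooth positive volume form), carrying an elliptic complex of first order differential operators $A^i: C^\infty(\mathcal{X},F^i)\to C^\infty(\mathcal{X},F^{i+1})$, $A^{i+1}A^i=0$, between Hermitian vector bundles, with formal adjoints $A^{i*}$. The Maxwell operator at step $i$ is $M^i = \begin{pmatrix} \imath k & A^{i*} \\ A^i & -\imath k \end{pmatrix}$ with $k$ a complex number. $t(u)$ denotes the tangential part of $u$ and $n(f)$ the normal part of $f$ on $\partial\mathcal{X}$ relative to the complex (so that Green's formula $(Au,g)=(u,A^*g)$ holds when $t(u)=0$ or $n(g)=0$). *)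

From HB Require Import structures.
From mathcomp Require Import all_boot all_order all_algebra.
Set Implicit Arguments. Unset Strict Implicit. Unset Printing Implicit Defensive.
Import Order.TTheory GRing.Theory Num.Theory.
Local Open Scope ring_scope.

Definition hermitian_inner (C : numClosedFieldType) (V : lmodType C)
  (h : V -> V -> C) : Prop :=
  [/\ forall (a : C) (u v w : V), h (a *: u + v) w = a * h u w + h v w,
      forall u v : V, h u v = (h v u)^*
    & forall u : V, u != 0 -> 0 < h u u].

Definition maxwell (C : numClosedFieldType) (V0 V1 : lmodType C)
  (A : V0 -> V1) (As : V1 -> V0) (k : C) (u : V0) (f : V1) : V0 * V1 :=
  (('i * k) *: u + As f, A u - ('i * k) *: f).

(* Green's formula applied to a solution of the Maxwell system gives the
   energy identity  k (f, f) = conj(k) (u, u).  Multiplying by k yields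
   k^2 (f, f) = |k|^2 (u, u), so if f were nonzero, k^2 would be a quotient of
   reals; hence f = 0, and then  -i k u = A^* f = 0  forces u = 0. *)
From HB Require Import structures.
From mathcomp Require Import all_boot all_order all_algebra.
Import Order.TTheory GRing.Theory Num.Theory.
Set Implicit Arguments. Unset Strict Implicit. Unset Printing Implicit Defensive.
Local Open Scope ring_scope.

Section HermitianInner.

Variables (C : numClosedFieldType) (V : lmodType C) (h : V -> V -> C).
Hypothesis hH : hermitian_inner h.

Lemma herm0l (w : V) : h 0 w = 0.
Proof.
case: hH => lin _ _; have := lin 1 0 0 w.
rewrite scale1r addr0 mul1r => E.
by apply: (@addrI _ (h 0 w)); rewrite addr0 -E.
Qed.

Lemma hermZl (a : C) (u w : V) : h (a *: u) w = a * h u w.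
Proof.
case: hH => lin _ _.
by have := lin a u 0 w; rewrite addr0 herm0l addr0.
Qed.

Lemma hermZr (a : C) (u w : V) : h u (a *: w) = a^* * h u w.
Proof.
case: hH => _ sym _.
by rewrite sym hermZl rmorphM /= -sym.
Qed.

Lemma herm_self_real (u : V) : h u u \is Num.real.
Proof. by case: hH => _ sym _; apply/CrealP; rewrite -sym. Qed.

Lemma herm_self_gt0 (u : V) : u != 0 -> 0 < h u u.
Proof. by case: hH => _ _; apply. Qed.

End HermitianInner.

Lemma sqr_real_of_mul_conj_eq (C : numClosedFieldType) (k a b : C) :
  0 < a -> b \is Num.real -> k * a = k^* * b -> k ^+ 2 \is Num.real.
Proof.
move=> a_gt0 b_real kab.
have -> : k ^+ 2 = `|k| ^+ 2 * b / a.
  by rewrite normCK -(mulrA k) -kab mulrA mulfK ?gt_eqF // expr2.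
apply: rpredM; last by rewrite rpredV gtr0_real.
by apply: rpredM => //; apply: rpredX; exact: normr_real.
Qed.

Section Maxwell.

Variables (C : numClosedFieldType) (V0 V1 : lmodType C).
Variables (A : {linear V0 -> V1}) (As : {linear V1 -> V0}) (k : C).

Lemma maxwell_eq0 (u : V0) (f : V1) :
  maxwell A As k u f = (0, 0) ->
  As f = - ('i * k) *: u /\ A u = ('i * k) *: f.
Proof.
case=> /eqP e1 /eqP e2; split; apply/eqP.
  by rewrite scaleNr -addr_eq0 addrC.
by rewrite -subr_eq0.
Qed.

Lemma maxwell_energy (h0 : V0 -> V0 -> C) (h1 : V1 -> V1 -> C)
  (u : V0) (f : V1) :
  hermitian_inner h0 -> hermitian_inner h1 ->
  maxwell A As k u f = (0, 0) -> h1 (A u) f = h0 u (As f) ->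
  k * h1 f f = k^* * h0 u u.
Proof.
move=> h0H h1H /maxwell_eq0[-> ->].
rewrite hermZl // hermZr // rmorphN rmorphM /= conjCi => G.
apply: (mulfI (neq0Ci C)).
by rewrite mulrA G !mulNr opprK mulrA.
Qed.

End Maxwell.

Theorem lemma3p1 (C : numClosedFieldType) (V0 V1 B0 B1 : lmodType C)
  (h0 : V0 -> V0 -> C) (h1 : V1 -> V1 -> C)
  (C2_0 : V0 -> Prop) (C2_1 : V1 -> Prop)
  (A : {linear V0 -> V1}) (As : {linear V1 -> V0})
  (t : {linear V0 -> B0}) (n : {linear V1 -> B1})
  (h0H : hermitian_inner h0) (h1H : hermitian_inner h1)
  (green : forall (u : V0) (g : V1), C2_0 u -> C2_1 g ->
      (t u = 0 \/ n g = 0) -> h1 (A u) g = h0 u (As g))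
  (k : C) (hk : k ^+ 2 \notin Num.real)
  (u : V0) (f : V1) (hu : C2_0 u) (hf : C2_1 f)
  (hM : maxwell A As k u f = (0, 0))
  (hbd : t u = 0 \/ n f = 0) :
  u = 0 /\ f = 0.
Proof.
have energy := maxwell_energy h0H h1H hM (green u f hu hf hbd).
have k_neq0 : k != 0 by apply: contra hk => /eqP ->; rewrite expr0n rpred0.
have f0 : f = 0.
  apply/eqP; apply: contraT => /(herm_self_gt0 h1H) a_gt0.
  by rewrite (sqr_real_of_mul_conj_eq a_gt0 (herm_self_real h0H u) energy) in hk.
split=> //; have [+ _] := maxwell_eq0 hM.
rewrite f0 linear0 => /esym/eqP.
by rewrite scaler_eq0 oppr_eq0 mulf_eq0 (negPf (neq0Ci C)) (negPf k_neq0) => /eqP.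
Qed.
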